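(* Let $\mathcal{A}$ and $\mathcal{B}$ be saturated fusion systems over finite $p$-groups $D$ and $E$, and let $\phi:E\to D$ be a group isomorphism inducing an isomorphism of fusion systems $\mathcal{B}\to\mathcal{A}$. Let $Q\le E$, $P=\phi(Q)$, $u\in N_D(P)$, $v\in N_E(Q)$, and suppose there exist an $\mathcal{A}$-isomorphism $\alpha:P\langle u\rangle\to\alpha(P\langle u\rangle)$ and a $\mathcal{B}$-isomorphism $\beta:Q\langle v\rangle\to\beta(Q\langle v\rangle)$ with $\alpha|_P=\phi\beta\phi^{-1}|_P$ and $\alpha(u)=\phi(\beta(v))$. Then (1) there is an $\mathcal{A}$-isomorphism $\psi:P\langle u\rangle\to P\langle\phi(v)\rangle$ with $\psi|_P=\mathrm{id}_P$ and $\psi(u)=\phi(v)$; in particular $u$ and $\phi(v)$ are $\mathcal{N}_\mathcal{A}(P)$-conjugate; (2) there is a $\mathcal{B}$-isomorphism $\omega:Q\langle v\rangle\to Q\langle\phi^{-1}(u)\rangle$ with $\omega|_Q=\mathrm{id}_Q$ and $\omega(v)=\phi^{-1}(u)$; in particular $v$ and $\phi^{-1}(u)$ are $\mathcal{N}_\mathcal{B}(Q)$-conjugate.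
   Context: $\phi$ induces an isomorphism $\mathcal{B}\to\mathcal{A}$ means $\mathrm{Hom}_\mathcal{A}(\phi(R),\phi(S))=\phi\circ\mathrm{Hom}_\mathcal{B}(R,S)\circ\phi^{-1}$ for all $R,S\le E$. $\mathcal{N}_\mathcal{A}(P)$ is the normalizer subsystem of $P$ in $\mathcal{A}$; elements $x,y$ are $\mathcal{F}$-conjugate if some $\mathcal{F}$-isomorphism $\langle x\rangle\to\langle y\rangle$ sends $x$ to $y$. *)

From mathcomp Require Import all_boot all_fingroup all_solvable.
Set Implicit Arguments.
Unset Strict Implicit.
Unset Printing Implicit Defensive.
Local Open Scope group_scope.

(* A fusion system over S (a subgroup of gT) is encoded by a predicate
   F P Q f  meaning "f (restricted to P) belongs to Hom_F(P, Q)".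
   Morphisms are finite functions gT -> gT; only their values on the
   domain P matter (axiom fs_ext). *)

Section Fusion.
Variable gT : finGroupType.
Implicit Types (S P Q R : {set gT}) (f g : {ffun gT -> gT}).

Definition fsys_type := {set gT} -> {set gT} -> {ffun gT -> gT} -> bool.

Definition conjf (s : gT) : {ffun gT -> gT} := [ffun x => x ^ s].

Definition compf (g f : {ffun gT -> gT}) : {ffun gT -> gT} := [ffun x => g (f x)].

Record is_fusion_system (S : {set gT}) (F : fsys_type) : Prop := {
  fs_sub : forall P Q f, F P Q f ->
    [/\ group_set P, group_set Q, P \subset S & Q \subset S];
  fs_hom : forall P Q f, F P Q f ->
    [/\ {in P &, {morph f : x y / x * y}}, {in P &, injective f}
      & f @: P \subset Q];
  fs_ext : forall P Q f g, {in P, f =1 g} -> F P Q f = F P Q g;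
  fs_conj : forall P Q s, group_set P -> group_set Q ->
    P \subset S -> Q \subset S -> s \in S -> P :^ s \subset Q ->
    F P Q (conjf s);
  fs_comp : forall P Q R f g, F P Q f -> F Q R g -> F P R (compf g f);
  fs_iso : forall P Q f, F P Q f ->
    F P (f @: P) f /\ exists2 g, F (f @: P) P g & {in P, forall x, g (f x) = x}
}.

Definition fconjugate (F : fsys_type) P Q := exists2 f, F P Q f & f @: P = Q.

Definition fully_normalized S (F : fsys_type) P :=
  forall Q, fconjugate F P Q -> #|'N_S(Q)| <= #|'N_S(P)|.

Definition fully_centralized S (F : fsys_type) P :=
  forall Q, fconjugate F P Q -> #|'C_S(Q)| <= #|'C_S(P)|.

Definition AutF (F : fsys_type) P : {set {perm gT}} :=
  [set a in Aut P | F P P [ffun x => a x]].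

Definition AutS S P : {set {perm gT}} :=
  [set a in Aut P | [exists s in 'N_S(P), [forall x in P, a x == x ^ s]]].

Definition Nphi S P f : {set gT} :=
  [set g in 'N_S(P) | [exists s in 'N_S(f @: P),
      [forall x in P, f (x ^ g) == (f x) ^ s]]].

Definition saturated_fusion_system (p : nat) S (F : fsys_type) : Prop :=
  [/\ group_set S, p.-group S, is_fusion_system S F,
   (forall P, group_set P -> P \subset S -> fully_normalized S F P ->
      fully_centralized S F P /\ p.-Sylow(AutF F P) (AutS S P))
  & (forall P f, F P S f -> fully_centralized S F (f @: P) ->
      exists2 g, F (Nphi S P f) S g & {in P, g =1 f})].

Definition normsys S (F : fsys_type) P Q R f : Prop :=
  [/\ Q \subset 'N_S(P), R \subset 'N_S(P), F Q R f &
      exists2 g, F (P <*> Q) (P <*> R) g & g @: P = P /\ {in Q, g =1 f}].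

Definition nconj S (F : fsys_type) P (x y : gT) : Prop :=
  exists2 f, normsys S F P <[x]> <[y]> f & f x = y.

End Fusion.

Definition induces_iso (gT hT : finGroupType) (E : {set hT})
  (A : fsys_type gT) (B : fsys_type hT) (phi : hT -> gT) (phi' : gT -> hT) :=
  forall R S : {set hT}, group_set R -> group_set S ->
    R \subset E -> S \subset E ->
    forall f : {ffun gT -> gT},
      A (phi @: R) (phi @: S) f <->
      exists2 g, B R S g & {in phi @: R, forall x, f x = phi (g (phi' x))}.

From mathcomp Require Import all_boot all_fingroup all_solvable.
Set Implicit Arguments.
Unset Strict Implicit.
Unset Printing Implicit Defensive.
Local Open Scope group_scope.

(* gamma := phi o beta o phi^-1 is an A-isomorphism defined on P<phi(v)>
   that agrees with alpha on P and sends phi(v) to alpha(u), so alpha and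
   gamma have the same image and psi := gamma^-1 o alpha fixes P and sends u
   to phi(v).  As psi normalizes P, its restriction to <u> is a morphism of
   N_A(P).  Part (2) is part (1) for phi^-1, which induces the inverse
   isomorphism A -> B. *)

Section ImsetMorphism.
Variables (aT rT : finGroupType) (G : {group aT}) (f : aT -> rT).
Hypothesis fM : {in G &, {morph f : x y / x * y}}.

Lemma imset_morphim (H : {set aT}) : H \subset G -> f @: H = Morphism fM @* H.
Proof. by move=> sHG; rewrite morphimEsub. Qed.

Lemma imset_cycle x : x \in G -> f @: <[x]> = <[f x]>.
Proof. by move=> xG; rewrite imset_morphim ?cycle_subG // morphim_cycle. Qed.

Lemma imset_joing_cycle (H : {set aT}) x : H \subset G -> x \in G ->
  f @: (H <*> <[x]>) = f @: H <*> <[f x]>.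
Proof.
move=> sHG xG; have sXG : <[x]> \subset G by rewrite cycle_subG.
rewrite (@imset_morphim (H <*> <[x]>)) ?join_subG ?sHG //.
by rewrite morphimY // -imset_morphim // morphim_cycle.
Qed.

Lemma imset_conjg (H : {set aT}) x : H \subset G -> x \in G ->
  f @: (H :^ x) = f @: H :^ f x.
Proof.
move=> sHG xG; rewrite (@imset_morphim (H :^ x)).
  by rewrite morphimJ // -imset_morphim.
by rewrite sub_conjg conjGid ?groupV.
Qed.

Lemma group_set_imset (H : {set aT}) : group_set H -> H \subset G ->
  group_set (f @: H).
Proof. by move=> gH sHG; rewrite imset_morphim // -[H]/(gval (Group gH)) groupP. Qed.

End ImsetMorphism.

Lemma mem_joing_cycle (gT : finGroupType) (H : {set gT}) x : x \in H <*> <[x]>.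
Proof. by rewrite -cycle_subG joing_subr. Qed.

Section FusionSystem.
Variables (gT : finGroupType) (S : {group gT}) (F : fsys_type gT).
Hypothesis fsF : is_fusion_system S F.
Implicit Types (H K L P : {set gT}) (f alpha gam psi : {ffun gT -> gT}).

Lemma fs_restr H K L f : F H K f -> group_set L -> L \subset H -> F L K f.
Proof.
move=> Ff gL sLH; have [gH _ sHS _] := fs_sub fsF Ff.
(* The inclusion of L into H is conjugation by 1. *)
have F1 : F L H (conjf 1).
  by apply: (fs_conj fsF); rewrite ?conjsg1 ?group1 ?(subset_trans sLH sHS).
suff /(fs_ext fsF) <- : {in L, compf f (conjf 1) =1 f} by exact: (fs_comp fsF F1 Ff).
by move=> x _; rewrite !ffunE conjg1.
Qed.

Lemma fs_factor H (H' : {set gT}) alpha gam :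
    F H (alpha @: H) alpha -> F H' (gam @: H') gam -> alpha @: H = gam @: H' ->
  exists psi, [/\ F H H' psi, psi @: H = H'
                & {in H & H', forall x y, alpha x = gam y -> psi x = y}].
Proof.
move=> Falpha Fgam eim; have [_ [ginv Fginv gamK]] := fs_iso fsF Fgam.
rewrite eim in Falpha; have Fpsi := fs_comp fsF Falpha Fginv.
have psiP : {in H & H', forall x y, alpha x = gam y -> compf ginv alpha x = y}.
  by move=> x y _ yH' axy; rewrite ffunE axy gamK.
exists (compf ginv alpha); split=> //; apply/eqP; rewrite eqEsubset.
have [_ _ ->] := fs_hom fsF Fpsi; apply/subsetP=> y yH'.
have /imsetP[x xH axy] : gam y \in alpha @: H by rewrite eim imset_f.
by rewrite -(psiP x y) ?imset_f.
Qed.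

Lemma nconj_fixing P u w psi : u \in 'N_S(P) -> w \in 'N_S(P) ->
    F (P <*> <[u]>) (P <*> <[w]>) psi -> {in P, forall x, psi x = x} ->
    psi u = w ->
  nconj S F P u w.
Proof.
move=> uN wN Fpsi psiP psiu; have [psiM _ _] := fs_hom fsF Fpsi.
have Fu : F <[u]> (P <*> <[w]>) psi.
  by apply: fs_restr Fpsi _ _; rewrite ?groupP // cycle_subG mem_joing_cycle.
have [Fpsi_u _] := fs_iso fsF Fu.
exists psi => //; split; rewrite ?cycle_subG //.
  by rewrite -psiu -(imset_cycle psiM) ?mem_joing_cycle.
exists psi => //; split=> //.
by rewrite -[RHS]imset_id; apply: eq_in_imset.
Qed.

End FusionSystem.

Section Transport.
Variables (gT hT : finGroupType) (D : {group gT}) (E : {group hT}).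
Variables (A : fsys_type gT) (B : fsys_type hT) (phi : hT -> gT) (phi' : gT -> hT).
Hypotheses (fsA : is_fusion_system D A) (fsB : is_fusion_system E B).
Hypotheses (phiM : {in E &, {morph phi : x y / x * y}})
  (phiK : {in E, cancel phi phi'}) (phi'K : {in D, cancel phi' phi})
  (phiE : phi @: E = D) (hind : induces_iso E A B phi phi').
Implicit Types (P : {set gT}) (Q R S : {set hT}) (u : gT) (v : hT).
Implicit Types (alpha : {ffun gT -> gT}) (beta : {ffun hT -> hT}).

Lemma phi'M : {in D &, {morph phi' : x y / x * y}}.
Proof.
move=> x y; rewrite -phiE => /imsetP[a aE ->] /imsetP[b bE ->].
by rewrite -phiM // !phiK // groupM.
Qed.

Lemma imset_phiK R : R \subset E -> phi' @: (phi @: R) = R.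
Proof.
move=> sRE; rewrite -imset_comp -[RHS]imset_id; apply: eq_in_imset => x xR.
by rewrite /= phiK // (subsetP sRE).
Qed.

Lemma imset_phi'K P : P \subset D -> phi @: (phi' @: P) = P.
Proof.
move=> sPD; rewrite -imset_comp -[RHS]imset_id; apply: eq_in_imset => x xP.
by rewrite /= phi'K // (subsetP sPD).
Qed.

Lemma phi'E : phi' @: D = E.
Proof. by rewrite -phiE imset_phiK. Qed.

Lemma induces_iso_transport R S beta :
    group_set R -> group_set S -> R \subset E -> S \subset E -> B R S beta ->
  A (phi @: R) (phi @: S) [ffun x => phi (beta (phi' x))].
Proof.
move=> gR gS sRE sSE Bbeta; apply: (proj2 (hind gR gS sRE sSE _)).
by exists beta => // _ /imsetP[x xR ->]; rewrite ffunE phiK ?(subsetP sRE).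
Qed.

Lemma induces_iso_inv : induces_iso D B A phi' phi.
Proof.
move=> R S gR gS sRD sSD f.
have sR'E : phi' @: R \subset E by rewrite -phi'E imsetS.
have sS'E : phi' @: S \subset E by rewrite -phi'E imsetS.
have gR' := group_set_imset phi'M gR sRD; have gS' := group_set_imset phi'M gS sSD.
have in_S'E y : y \in phi' @: S -> y \in E by apply: (subsetP sS'E).
split=> [Bf | [g Ag fg]].
  exists [ffun x => phi (f (phi' x))].
    by rewrite -(imset_phi'K sRD) -(imset_phi'K sSD); exact: induces_iso_transport.
  move=> x xR'; have [_ _ /subsetP fS'] := fs_hom fsB Bf.
  have fxE : f x \in E by rewrite in_S'E ?fS' ?imset_f.
  by rewrite ffunE (phiK (subsetP sR'E x xR')) phiK.
rewrite -(imset_phi'K sRD) -(imset_phi'K sSD) in Ag.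
have [h Bh gh] := proj1 (hind gR' gS' sR'E sS'E _) Ag.
have [_ _ /subsetP hS'] := fs_hom fsB Bh.
rewrite (fs_ext fsB _ _ (g := h)) // => x xR'.
have xE := subsetP sR'E x xR'.
have hxE : h x \in E by rewrite in_S'E ?hS' ?imset_f.
by rewrite fg ?gh ?imset_f // (phiK xE) phiK.
Qed.

Lemma matching_isos_inv Q P u v alpha beta :
    Q \subset E -> P = phi @: Q ->
    B (Q <*> <[v]>) (beta @: (Q <*> <[v]>)) beta ->
    {in P, forall x, alpha x = phi (beta (phi' x))} -> alpha u = phi (beta v) ->
  {in Q, forall x, beta x = phi' (alpha (phi x))} /\ beta v = phi' (alpha u).
Proof.
move=> sQE -> Bbeta hab habu; have [_ _ _ /subsetP sbE] := fs_sub fsB Bbeta.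
have betaE x : x \in Q <*> <[v]> -> beta x \in E by move=> xQv; rewrite sbE ?imset_f.
split; last by rewrite habu phiK ?betaE ?mem_joing_cycle.
move=> x xQ; have xE := subsetP sQE x xQ.
by rewrite hab ?imset_f // phiK // phiK // betaE // (subsetP (joing_subl _ _)).
Qed.

Lemma conj_fixing_of_matching_isos Q P u v alpha beta :
    group_set Q -> Q \subset E -> P = phi @: Q ->
    u \in 'N_D(P) -> v \in 'N_E(Q) ->
    A (P <*> <[u]>) (alpha @: (P <*> <[u]>)) alpha ->
    B (Q <*> <[v]>) (beta @: (Q <*> <[v]>)) beta ->
    {in P, forall x, alpha x = phi (beta (phi' x))} -> alpha u = phi (beta v) ->
  (exists psi : {ffun gT -> gT},
      [/\ A (P <*> <[u]>) (P <*> <[phi v]>) psi,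
          psi @: (P <*> <[u]>) = P <*> <[phi v]>,
          {in P, forall x, psi x = x} & psi u = phi v])
   /\ nconj D A P u (phi v).
Proof.
move=> gQ sQE defP uN vN Aalpha Bbeta hab habu.
have /setIP[vE nQv] := vN.
have sQvE : Q <*> <[v]> \subset E by rewrite join_subG sQE cycle_subG.
have defPv : phi @: (Q <*> <[v]>) = P <*> <[phi v]>.
  by rewrite (imset_joing_cycle phiM) ?defP.
have [_ gbQv _ sbE] := fs_sub fsB Bbeta.
have := induces_iso_transport (groupP (joing_group Q <[v]>)) gbQv sQvE sbE Bbeta.
set gam := [ffun x => _]; rewrite defPv => /(fs_iso fsA)[Agam _].
have gam_v : gam (phi v) = alpha u by rewrite ffunE phiK.
have alpha_P : {in P, forall x, alpha x = gam x} by move=> x xP; rewrite hab ?ffunE.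
have eim : alpha @: (P <*> <[u]>) = gam @: (P <*> <[phi v]>).
  have [alphaM _ _] := fs_hom fsA Aalpha; have [gamM _ _] := fs_hom fsA Agam.
  rewrite (imset_joing_cycle alphaM) ?(imset_joing_cycle gamM);
    rewrite ?joing_subl ?mem_joing_cycle // gam_v.
  by congr (_ <*> _); apply: eq_in_imset.
have [psi [Apsi impsi psiP]] := fs_factor fsA Aalpha Agam eim.
have psi_P : {in P, forall x, psi x = x}.
  by move=> x xP; apply: psiP; rewrite ?alpha_P // (subsetP (joing_subl _ _)).
have psi_u : psi u = phi v by apply: psiP; rewrite ?mem_joing_cycle.
have phivN : phi v \in 'N_D(P).
  rewrite inE -phiE imset_f //= inE defP -(imset_conjg phiM) //.
  by apply: imsetS; move: nQv; rewrite inE.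
split; first by exists psi.
exact: (nconj_fixing fsA uN phivN Apsi psi_P psi_u).
Qed.

End Transport.

Theorem lemma8p3 (gT hT : finGroupType) (p : nat) (hp : prime p)
  (D : {group gT}) (E : {group hT})
  (A : fsys_type gT) (B : fsys_type hT)
  (hA : saturated_fusion_system p D A) (hB : saturated_fusion_system p E B)
  (phi : hT -> gT) (phi' : gT -> hT)
  (phiM : {in E &, {morph phi : x y / x * y}})
  (phiK : {in E, cancel phi phi'}) (phi'K : {in D, cancel phi' phi})
  (phiE : phi @: E = D)
  (hind : induces_iso E A B phi phi')
  (Q : {group hT}) (hQ : Q \subset E) (P : {set gT}) (hP : P = phi @: Q)
  (u : gT) (v : hT) (hu : u \in 'N_D(P)) (hv : v \in 'N_E(Q))
  (alpha : {ffun gT -> gT}) (beta : {ffun hT -> hT})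
  (halpha : A (P <*> <[u]>) (alpha @: (P <*> <[u]>)) alpha)
  (hbeta : B (Q <*> <[v]>) (beta @: (Q <*> <[v]>)) beta)
  (hab : {in P, forall x, alpha x = phi (beta (phi' x))})
  (habu : alpha u = phi (beta v)) :
  ((exists psi : {ffun gT -> gT},
      [/\ A (P <*> <[u]>) (P <*> <[phi v]>) psi,
          psi @: (P <*> <[u]>) = P <*> <[phi v]>,
          {in P, forall x, psi x = x} & psi u = phi v])
   /\ nconj D A P u (phi v))
  /\
  ((exists omega : {ffun hT -> hT},
      [/\ B (Q <*> <[v]>) (Q <*> <[phi' u]>) omega,
          omega @: (Q <*> <[v]>) = Q <*> <[phi' u]>,
          {in Q, forall x, omega x = x} & omega v = phi' u])
   /\ nconj E B Q v (phi' u)).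
Proof.
have [_ _ fsA _ _] := hA; have [_ _ fsB _ _] := hB.
split.
  exact: (conj_fixing_of_matching_isos fsA fsB phiM phiK phiE hind (groupP Q)
    hQ hP hu hv halpha hbeta hab habu).
have sPD : P \subset D by rewrite hP -phiE imsetS.
have gP : group_set P by rewrite hP (group_set_imset phiM) ?groupP.
have defQ : gval Q = phi' @: P by rewrite hP (imset_phiK phiK hQ).
have [hab' habu'] := matching_isos_inv fsB phiK hQ hP hbeta hab habu.
have hind' := induces_iso_inv fsB phiM phiK phi'K phiE hind.
exact: (conj_fixing_of_matching_isos fsB fsA (phi'M phiM phiK phiE) phi'K
  (phi'E phiK phiE) hind' gP sPD defQ hv hu hbeta halpha hab' habu').
Qed.
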